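(* Let $\mathcal L_{\mathcal N}=(\mathcal L,[\cdot_\lambda\cdot]_{\mathcal L},\mathcal N)$ and $\mathcal H_{\mathcal Q}=(\mathcal H,[\cdot_\lambda\cdot]_{\mathcal H},\mathcal Q)$ be Nijenhuis Lie conformal algebras, and let $\mathcal E_{\mathcal R}$ and $\mathcal E'_{\mathcal R'}$ be two equivalent non-abelian extensions of $\mathcal L_{\mathcal N}$ by $\mathcal H_{\mathcal Q}$, with sections $s$ of $\mathcal E_{\mathcal R}$ and $s'$ of $\mathcal E'_{\mathcal R'}$ respectively. Then the non-abelian $2$-cocycles $(\chi_\lambda,\rho,\Phi)$ and $(\chi'_\lambda,\rho',\Phi')$ induced by $s$ and $s'$ are equivalent.
   Context: All spaces are over $\mathbb C$. A Lie conformal algebra is a $\mathbb C[\partial]$-module with a $\mathbb C$-bilinear $\lambda$-bracket satisfying $[\partial a_\lambda b]=-\lambda[a_\lambda b]$, $[a_\lambda\partial b]=(\partial+\lambda)[a_\lambda b]$, $[a_\lambda b]=-[b_{-\partial-\lambda}a]$, $[a_\lambda[b_\mu c]]=[[a_\lambda b]_{\lambda+\mu}c]+[b_\mu[a_\lambda c]]$. A Nijenhuis operator is a $\mathbb C[\partial]$-linear $\mathcal N$ with $[\mathcal N(p)_\lambda\mathcal N(q)]=\mathcal N([\mathcal N(p)_\lambda q]+[p_\lambda\mathcal N(q)]-\mathcal N([p_\lambda q]))$; a Nijenhuis Lie conformal algebra is a Lie conformal algebra with a Nijenhuis operator; morphisms are bracket-preserving $\mathbb C[\partial]$-linear maps intertwining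 the operators. A non-abelian extension of $\mathcal L_{\mathcal N}$ by $\mathcal H_{\mathcal Q}$ is a Nijenhuis Lie conformal algebra $\mathcal E_{\mathcal R}=(\mathcal E,[\cdot_\lambda\cdot]_{\mathcal E},\mathcal R)$ with a short exact sequence $0\to\mathcal H_{\mathcal Q}\xrightarrow{inc}\mathcal E_{\mathcal R}\xrightarrow{proj}\mathcal L_{\mathcal N}\to0$ of morphisms of Nijenhuis Lie conformal algebras, split as $\mathbb C[\partial]$-modules; identify $\mathcal H$ with $inc(\mathcal H)$, so $\mathcal R|_{\mathcal H}=\mathcal Q$. Two extensions $\mathcal E_{\mathcal R},\mathcal E'_{\mathcal R'}$ are equivalent if there is a morphism of Nijenhuis Lie conformal algebras $\tau:\mathcal E_{\mathcal R}\to\mathcal E'_{\mathcal R'}$ with $\tau\circ inc=inc'$ and $proj'\circ\tau=proj$. A section is a $\mathbb C[\partial]$-linear $s$ with $proj\circ s=\mathrm{id}$; it induces $\chi_\lambda(p,q)=[s(p)_\lambda s(q)]_{\mathcal E}-s([p_\lambda q]_{\mathcal L})$, $\rho(p)_\lambda h=[s(p)_\lambda h]_{\mathcal E}$, $\Phi(p)=\mathcal R(s(p))-s(\mathcal N(p))$, all $\mathcal H$-valued. A non-abelian $2$-cocycle of $\mathcal L_{\mathcal N}$ with values in $\mathcal H_{\mathcal Q}$ is a triple of maps $\chi_\lambda:\mathcal L\otimes\mathcal L\to\mathcal H[\lambda]$, $\rho:\mathcal L\otimes\mathcal H\to\mathcal H[\lambda]$, $\Phi:\mathcal L\to\mathcal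 H$ satisfying, for all $p,q,r\in\mathcal L$, $h\in\mathcal H$: (i) $\rho(p)_\lambda\rho(q)_\mu h-\rho(q)_\mu\rho(p)_\lambda h-\rho([p_\lambda q]_{\mathcal L})_{\lambda+\mu}h=[\chi_\lambda(p,q)_{\lambda+\mu}h]_{\mathcal H}$; (ii) $\rho(p)_\lambda\chi_\mu(q,r)+\rho(q)_\mu\chi_\lambda(r,p)+\rho(r)_{-\partial-\lambda-\mu}\chi_\lambda(p,q)-\chi_{\lambda+\mu}([q_\mu r]_{\mathcal L},p)-\chi_{\lambda+\mu}([r_{-\partial-\lambda}p]_{\mathcal L},q)-\chi_{\lambda+\mu}([p_\lambda q]_{\mathcal L},r)=0$; (iii) $\rho(\mathcal N p)_\lambda\mathcal Q(h)=\mathcal Q(\rho(\mathcal N p)_\lambda h+\rho(p)_\lambda\mathcal Q(h)-\mathcal Q(\rho(p)_\lambda h))+\mathcal Q([\Phi(p)_\lambda h]_{\mathcal H})-[\Phi(p)_\lambda\mathcal Q(h)]_{\mathcal H}$; (iv) $\chi_\lambda(\mathcal Np,\mathcal Nq)-\mathcal Q(\chi_\lambda(\mathcal Np,q)+\chi_\lambda(p,\mathcal Nq)-\mathcal Q\chi_\lambda(p,q))-\Phi([\mathcal N(p)_\lambda q]_{\mathcal L}+[p_\lambda\mathcal N(q)]_{\mathcal L}-\mathcal N[p_\lambda q]_{\mathcal L})+\rho(\mathcal Np)_\lambda\Phi(q)-\rho(\mathcal Nq)_{-\partial-\lambda}\Phi(p)+\mathcal Q(\rho(q)_{-\partial-\lambda}\Phi(p)-\rho(p)_\lambda\Phi(q)+\Phi([p_\lambda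 q]_{\mathcal L}))+[\Phi(p)_\lambda\Phi(q)]_{\mathcal H}=0$. Two non-abelian $2$-cocycles $(\chi_\lambda,\rho,\Phi)$, $(\chi'_\lambda,\rho',\Phi')$ are equivalent if there is a linear map $\tau:\mathcal L\to\mathcal H$ with $\rho(p)_\lambda h-\rho'(p)_\lambda h=[\tau(p)_\lambda h]_{\mathcal H}$, $\chi_\lambda(p,q)-\chi'_\lambda(p,q)=[\tau(p)_\lambda\tau(q)]_{\mathcal H}-\tau([p_\lambda q]_{\mathcal L})+\rho'(p)_\lambda\tau(q)-\rho'(q)_{-\partial-\lambda}\tau(p)$, and $\Phi(p)-\Phi'(p)=\mathcal Q(\tau(p))-\tau(\mathcal N(p))$ for all $p,q\in\mathcal L$, $h\in\mathcal H$. *)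

From HB Require Import structures.
From mathcomp Require Import all_boot all_algebra.
From mathcomp Require Import complex Rstruct.

Set Implicit Arguments.
Unset Strict Implicit.
Unset Printing Implicit Defensive.
Import GRing.Theory.
Local Open Scope ring_scope.

Definition CC : numClosedFieldType := (Rdefinitions.R : rcfType)[i].

Definition lin (A B : lmodType CC) (f : A -> B) : Prop :=
  forall (k : CC) (x y : A), f (k *: x + y) = k *: f x + f y.

(* A one-variable polynomial  f(lambda) in M[lambda] is given by its list of  *)
(* coefficients  f = [:: f_0; f_1; ...]  (f = sum_n lambda^n f_n); trailing  *)
(* zeros are irrelevant since we always compare coefficientwise (nth 0).     *)
(* Polynomials in the two variables lambda, mu (and all intermediate         *)
(* expressions) are represented as formal sums of monomials: a list of       *)
(* triples ((i, j), m) standing for  lambda^i mu^j m.                        *)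
Definition tm (M : lmodType CC) := ((nat * nat) * M)%type.

Definition coef2 (M : lmodType CC) (s : seq (tm M)) (i j : nat) : M :=
  \sum_(t <- s | (t.1.1 == i) && (t.1.2 == j)) t.2.

Definition peq (M : lmodType CC) (s s' : seq (tm M)) : Prop :=
  forall i j, coef2 s i j = coef2 s' i j.

Definition tneg (M : lmodType CC) (s : seq (tm M)) : seq (tm M) :=
  [seq (t.1, - t.2) | t <- s].

Definition tmap (M N : lmodType CC) (f : M -> N) (s : seq (tm M)) : seq (tm N) :=
  [seq (t.1, f t.2) | t <- s].

Definition tmulX (M : lmodType CC) (s : seq (tm M)) : seq (tm M) :=
  [seq ((t.1.1.+1, t.1.2), t.2) | t <- s].

(* Substitution of  nu := cl*lambda + cm*mu + cd*partial  into the polynomial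
   f(nu) = sum_k nu^k f_k  in M[nu], where partial = d acts on the coefficients
   (i.e. on the result):
     f(cl lambda + cm mu + cd partial)
       = sum_k sum_{b+c+a=k} k!/(a!b!c!) cl^b cm^c cd^a lambda^b mu^c d^a(f_k). *)
Definition subst (M : lmodType CC) (d : M -> M) (f : seq M) (cl cm cd : CC)
  : seq (tm M) :=
  flatten [seq flatten [seq
      [seq ((b, c),
            (('C(k, b) * 'C(k - b, c))%N%:R * cl ^+ b * cm ^+ c * cd ^+ (k - b - c))
              *: iter (k - b - c)%N d (nth 0 f k))
      | c <- iota 0 (k - b).+1]
    | b <- iota 0 k.+1]
  | k <- iota 0 (size f)].

Definition Pl (M : lmodType CC) (d : M -> M) (f : seq M) := subst d f 1 0 0.
Definition Pm (M : lmodType CC) (d : M -> M) (f : seq M) := subst d f 0 1 0.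

Definition bind (M N : lmodType CC) (s : seq (tm M)) (F : M -> seq (tm N))
  : seq (tm N) :=
  flatten [seq [seq ((t.1.1 + u.1.1, t.1.2 + u.1.2)%N, u.2) | u <- F t.2] | t <- s].

(* A C[partial]-module is a C-vector space with a C-linear endomorphism dd. *)
(* The lambda-bracket [a_lambda b] is  br a b  (coefficient list in lambda).*)
Record NLCA := MkNLCA {
  car :> lmodType CC;
  dd : car -> car;
  dd_lin : lin dd;
  br : car -> car -> seq car;
  br_linl : forall (k : CC) a b c n,
    nth 0 (br (k *: a + b) c) n = k *: nth 0 (br a c) n + nth 0 (br b c) n;
  br_linr : forall (k : CC) a b c n,
    nth 0 (br c (k *: a + b)) n = k *: nth 0 (br c a) n + nth 0 (br c b) n;
  br_dl : forall a b,
    peq (Pl dd (br (dd a) b)) (tneg (tmulX (Pl dd (br a b))));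
  br_dr : forall a b,
    peq (Pl dd (br a (dd b))) (tmap dd (Pl dd (br a b)) ++ tmulX (Pl dd (br a b)));
  (* [a_lambda b] = - [b_{-partial-lambda} a] *)
  br_skew : forall a b,
    peq (Pl dd (br a b)) (tneg (subst dd (br b a) (-1) 0 (-1)));
  (* [a_lambda [b_mu c]] = [[a_lambda b]_{lambda+mu} c] + [b_mu [a_lambda c]] *)
  br_jacobi : forall a b c,
    peq (bind (Pm dd (br b c)) (fun x => Pl dd (br a x)))
        (bind (Pl dd (br a b)) (fun x => subst dd (br x c) 1 1 0)
         ++ bind (Pl dd (br a c)) (fun x => Pm dd (br b x)));
  nij : car -> car;
  nij_lin : lin nij;
  nij_dd : forall x, nij (dd x) = dd (nij x);
  nij_cond : forall p q,
    peq (Pl dd (br (nij p) (nij q)))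
        (tmap nij (Pl dd (br (nij p) q) ++ Pl dd (br p (nij q))
                   ++ tneg (tmap nij (Pl dd (br p q)))))
}.

Definition cdlin (A B : NLCA) (f : A -> B) : Prop :=
  lin f /\ (forall x, f (dd x) = dd (f x)).

Definition nhom (A B : NLCA) (f : A -> B) : Prop :=
  cdlin f
  /\ (forall a b n, f (nth 0 (br a b) n) = nth 0 (br (f a) (f b)) n)
  /\ (forall x, f (nij x) = nij (f x)).

Definition is_section (L E : NLCA) (proj : E -> L) (s : L -> E) : Prop :=
  cdlin s /\ (forall p, proj (s p) = p).

Definition is_ext (L H E : NLCA) (inc : H -> E) (proj : E -> L) : Prop :=
  nhom inc /\ nhom proj
  /\ injective inc
  /\ (forall p : L, exists e : E, proj e = p)
  /\ (forall e : E, proj e = 0 <-> exists h : H, inc h = e)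
  /\ (exists s : L -> E, is_section proj s).

Definition ext_equiv (L H E E' : NLCA) (inc : H -> E) (proj : E -> L)
    (inc' : H -> E') (proj' : E' -> L) : Prop :=
  exists t : E -> E',
    nhom t /\ (forall h, t (inc h) = inc' h) /\ (forall e, proj' (t e) = proj e).

(* (chi, rho, Phi) is the triple induced by the section s (with H identified
   with inc(H), i.e. the H-valued maps are characterised through inc, which is
   injective):
     chi_lambda(p,q) = [s p_lambda s q]_E - s [p_lambda q]_L,
     rho(p)_lambda h = [s p_lambda h]_E,
     Phi(p) = R (s p) - s (N p). *)
Definition induced (L H E : NLCA) (inc : H -> E) (s : L -> E)
    (chi : L -> L -> seq H) (rho : L -> H -> seq H) (Phi : L -> H) : Prop :=
  (forall p q n, inc (nth 0 (chi p q) n)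
                 = nth 0 (br (s p) (s q)) n - s (nth 0 (br p q) n))
  /\ (forall p h n, inc (nth 0 (rho p h) n) = nth 0 (br (s p) (inc h)) n)
  /\ (forall p, inc (Phi p) = nij (s p) - s (nij p)).

Definition cocycle_equiv (L H : NLCA)
    (chi : L -> L -> seq H) (rho : L -> H -> seq H) (Phi : L -> H)
    (chi' : L -> L -> seq H) (rho' : L -> H -> seq H) (Phi' : L -> H) : Prop :=
  exists tau : L -> H,
    cdlin tau
    /\ (forall p h n, nth 0 (rho p h) n - nth 0 (rho' p h) n = nth 0 (br (tau p) h) n)
    (* chi - chi' = [tau p_lambda tau q] - tau [p_lambda q]
                    + rho'(p)_lambda tau q - rho'(q)_{-partial-lambda} tau p *)
    /\ (forall p q : L,
          peq (Pl (@dd H) (chi p q) ++ tneg (Pl (@dd H) (chi' p q)))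
              (Pl (@dd H) (br (tau p) (tau q))
               ++ tneg (tmap tau (Pl (@dd L) (br p q)))
               ++ Pl (@dd H) (rho' p (tau q))
               ++ tneg (subst (@dd H) (rho' q (tau p)) (-1) 0 (-1))))
    /\ (forall p, Phi p - Phi' p = nij (tau p) - tau (nij p)).

From HB Require Import structures.
From mathcomp Require Import all_boot all_algebra.
From mathcomp Require Import complex Rstruct.
From Stdlib Require Import ClassicalEpsilon.

Set Implicit Arguments.
Unset Strict Implicit.
Unset Printing Implicit Defensive.
Import GRing.Theory.
Local Open Scope ring_scope.

(* An equivalence t : E -> E' turns the section s of E into the section t o s
   of E' without changing the induced triple, so it suffices to compare the
   triples induced by two sections s, s' of one extension.  Their difference
   s - s' is C[partial]-linear with values in H, giving tau; expanding
   brackets and the Nijenhuis operators with s = s' + tau yields the three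
   relations, the cross term [tau(p)_lambda s'(q)] being rewritten as
   -rho'(q)_{-partial-lambda} tau(p) by skew-symmetry. *)

Section LinearMaps.
Variables (A B : lmodType CC) (f : A -> B).
Hypothesis f_lin : lin f.

Lemma lin0 : f 0 = 0.
Proof. by apply: (addrI (f 0)); rewrite addr0 -{1}[f 0]scale1r -f_lin scale1r addr0. Qed.

Lemma linD x y : f (x + y) = f x + f y.
Proof. by rewrite -{1}(scale1r x) f_lin scale1r. Qed.

Lemma linZ k x : f (k *: x) = k *: f x.
Proof. by rewrite -[k *: x]addr0 f_lin lin0 addr0. Qed.

Lemma linN x : f (- x) = - f x.
Proof. by rewrite -scaleN1r linZ scaleN1r. Qed.

Lemma linB x y : f (x - y) = f x - f y.
Proof. by rewrite linD linN. Qed.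

Lemma lin_sum (I : Type) (r : seq I) (P : pred I) (F : I -> A) :
  f (\sum_(i <- r | P i) F i) = \sum_(i <- r | P i) f (F i).
Proof. exact: (big_morph f linD lin0). Qed.

End LinearMaps.

Lemma iter_lin0 (A : lmodType CC) (d : A -> A) n : lin d -> iter n d 0 = 0.
Proof. by move=> d_lin; elim: n => //= n ->; apply: lin0. Qed.

Lemma iter_morph (A B : lmodType CC) (f : A -> B) (d : A -> A) (d' : B -> B) n x :
  (forall x, f (d x) = d' (f x)) -> f (iter n d x) = iter n d' (f x).
Proof. by move=> fd; elim: n => //= n <-. Qed.

Lemma cdlin_comp (A B C : NLCA) (f : A -> B) (g : B -> C) :
  cdlin f -> cdlin g -> cdlin (g \o f).
Proof. by move=> [f_lin fd] [g_lin gd]; split=> [k x y|x] /=; rewrite ?f_lin ?g_lin ?fd. Qed.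

Lemma cdlinB (A B : NLCA) (f g : A -> B) :
  cdlin f -> cdlin g -> cdlin (fun x => f x - g x).
Proof.
move=> [f_lin fd] [g_lin gd]; split=> [k x y|x].
  by rewrite f_lin g_lin scalerBr opprD addrACA.
by rewrite fd gd (linB (@dd_lin B)).
Qed.

Section BracketAdditivity.
Variables (A : NLCA) (a b c : A) (n : nat).

Lemma brDl : nth 0 (br (a + b) c) n = nth 0 (br a c) n + nth 0 (br b c) n.
Proof. by rewrite -{1}(scale1r a) br_linl scale1r. Qed.

Lemma brDr : nth 0 (br c (a + b)) n = nth 0 (br c a) n + nth 0 (br c b) n.
Proof. by rewrite -{1}(scale1r a) br_linr scale1r. Qed.

Lemma brBl : nth 0 (br (a - b) c) n = nth 0 (br a c) n - nth 0 (br b c) n.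
Proof. by rewrite addrC -scaleN1r br_linl scaleN1r addrC. Qed.

End BracketAdditivity.

Section SubstCoefficients.
Variable M : lmodType CC.
Implicit Types (d : M -> M) (f : seq M) (s t : seq (tm M)).

Lemma coef2_cat s t i j : coef2 (s ++ t) i j = coef2 s i j + coef2 t i j.
Proof. exact: big_cat. Qed.

Lemma coef2_tneg s i j : coef2 (tneg s) i j = - coef2 s i j.
Proof. by rewrite /coef2 big_map sumrN. Qed.

Lemma coef2_flatten (T : Type) (F : T -> seq (tm M)) (r : seq T) i j :
  coef2 (flatten [seq F x | x <- r]) i j = \sum_(x <- r) coef2 (F x) i j.
Proof. by rewrite /coef2 big_flatten big_map. Qed.

Definition subst_block d (cl cm cd : CC) (k : nat) (x : M) : seq (tm M) :=
  flatten [seq [seq ((b, c),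
            (('C(k, b) * 'C(k - b, c))%N%:R * cl ^+ b * cm ^+ c * cd ^+ (k - b - c))
              *: iter (k - b - c)%N d x)
      | c <- iota 0 (k - b).+1] | b <- iota 0 k.+1].

Lemma subst_flatten d f cl cm cd :
  subst d f cl cm cd
  = flatten [seq subst_block d cl cm cd k (nth 0 f k) | k <- iota 0 (size f)].
Proof. by []. Qed.

Lemma coef2_subst_block0 d cl cm cd k i j :
  lin d -> coef2 (subst_block d cl cm cd k 0) i j = 0.
Proof.
move=> d_lin; rewrite coef2_flatten big1 // => b _.
by rewrite /coef2 big_map big1 // => c _; rewrite iter_lin0 ?scaler0.
Qed.

Lemma coef2_subst_widen n d f cl cm cd i j : lin d -> (size f <= n)%N ->
  coef2 (subst d f cl cm cd) i j
  = \sum_(k < n) coef2 (subst_block d cl cm cd k (nth 0 f k)) i j.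
Proof.
move=> d_lin le_f_n; rewrite subst_flatten coef2_flatten.
rewrite [iota _ _](_ : _ = index_iota 0 (size f)) ?big_mkord; last first.
  by rewrite /index_iota subn0.
rewrite (big_ord_widen n (fun k => coef2 (subst_block d cl cm cd k (nth 0 f k)) i j) le_f_n).
rewrite big_mkcond; apply: eq_bigr => k _; case: ltnP => // le_f_k.
by rewrite nth_default ?coef2_subst_block0.
Qed.

Lemma coef2_subst_block_Pl d k (x : M) i j :
  coef2 (subst_block d 1 0 0 k x) i j = if (k == i) && (j == 0)%N then x else 0.
Proof.
rewrite coef2_flatten.
rewrite (eq_big_seq (fun b => if b == k then (if (k == i) && (j == 0)%N then x else 0) else 0)).
  by rewrite -big_mkcond [iota _ _](_ : _ = index_iota 0 k.+1) // big_nat1_eq ltnSn.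
move=> b; rewrite mem_iota add0n => /andP[_ le_b_k]; rewrite /coef2 big_map /=.
have [-> | ne_b_k] := eqVneq b k.
  rewrite subnn big_cons big_nil /= binn bin0 muln1 expr1n subn0 !expr0 !mulr1.
  by rewrite scale1r addr0 (eq_sym 0%N).
have lt_b_k : (b < k)%N by rewrite ltn_neqAle ne_b_k -ltnS.
rewrite big1 // => -[|c] _; rewrite !expr0n /=.
  by rewrite subn0 subn_eq0 leqNgt lt_b_k mulr0 scale0r.
by rewrite mulr0 mul0r scale0r.
Qed.

Lemma coef2_Pl d f i j : coef2 (Pl d f) i j = if j == 0%N then nth 0 f i else 0.
Proof.
rewrite /Pl subst_flatten coef2_flatten.
under eq_bigr do rewrite coef2_subst_block_Pl.
case: (j == 0%N); last by rewrite big1 // => k _; rewrite andbF.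
under eq_bigr do rewrite andbT.
rewrite -big_mkcond [iota _ _](_ : _ = index_iota 0 (size f)) ?big_nat1_eq; last first.
  by rewrite /index_iota subn0.
by case: ltnP => // le_f_i; rewrite nth_default.
Qed.

End SubstCoefficients.

Section SubstMorphisms.
Variables (M M' : lmodType CC) (d : M -> M) (d' : M' -> M') (phi : M -> M').
Hypotheses (d_lin : lin d) (d'_lin : lin d').
Hypotheses (phi_lin : lin phi) (phi_d : forall x, phi (d x) = d' (phi x)).

Lemma coef2_tmap (s : seq (tm M)) i j : coef2 (tmap phi s) i j = phi (coef2 s i j).
Proof. by rewrite /coef2 big_map (lin_sum phi_lin). Qed.

Lemma tmap_subst_block cl cm cd k x :
  tmap phi (subst_block d cl cm cd k x) = subst_block d' cl cm cd k (phi x).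
Proof.
rewrite /tmap /subst_block map_flatten -map_comp; congr flatten.
apply: (@eq_map _ (seq (tm M'))) => b; rewrite /comp -map_comp.
apply: (@eq_map _ (tm M')) => c /=.
by rewrite (linZ phi_lin) (iter_morph _ _ phi_d).
Qed.

Lemma coef2_subst_morph (f : seq M) (g : seq M') cl cm cd i j :
  (forall k, phi (nth 0 f k) = nth 0 g k) ->
  phi (coef2 (subst d f cl cm cd) i j) = coef2 (subst d' g cl cm cd) i j.
Proof.
move=> phi_fg.
rewrite !(@coef2_subst_widen _ (size f + size g)) ?leq_addr ?leq_addl //.
rewrite (lin_sum phi_lin); apply: eq_bigr => k _.
by rewrite -coef2_tmap tmap_subst_block phi_fg.
Qed.

End SubstMorphisms.

Lemma cdlin_factor (A H E : NLCA) (inc : H -> E) (g : A -> E) :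
  cdlin inc -> injective inc -> cdlin g -> (forall p, exists h, inc h = g p) ->
  exists tau : A -> H, cdlin tau /\ forall p, inc (tau p) = g p.
Proof.
move=> [inc_lin inc_d] inc_inj [g_lin g_d] /choice[tau inc_tau].
exists tau; split=> //; split=> [k x y|x]; apply: inc_inj.
  by rewrite inc_lin !inc_tau g_lin.
by rewrite inc_d !inc_tau g_d.
Qed.

Section TwoSections.
Variables (L H E : NLCA) (inc : H -> E) (s s' : L -> E) (tau : L -> H).
Variables (chi : L -> L -> seq H) (rho : L -> H -> seq H) (Phi : L -> H).
Variables (chi' : L -> L -> seq H) (rho' : L -> H -> seq H) (Phi' : L -> H).
Hypotheses (inc_hom : nhom inc) (inc_inj : injective inc).
Hypotheses (tau_cdlin : cdlin tau) (inc_tau : forall p, inc (tau p) = s p - s' p).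
Hypotheses (s_ind : induced inc s chi rho Phi) (s'_ind : induced inc s' chi' rho' Phi').

Let inc_lin : lin inc := inc_hom.1.1.
Let inc_br a b n : inc (nth 0 (br a b) n) = nth 0 (br (inc a) (inc b)) n :=
  inc_hom.2.1 a b n.

Lemma s_split p : s p = s' p + inc (tau p).
Proof. by rewrite inc_tau addrC subrK. Qed.

Lemma rho_sub_rho' p h n :
  nth 0 (rho p h) n - nth 0 (rho' p h) n = nth 0 (br (tau p) h) n.
Proof.
apply: inc_inj; rewrite (linB inc_lin) s_ind.2.1 s'_ind.2.1 inc_br inc_tau.
by rewrite brBl.
Qed.

Lemma Phi_sub_Phi' p : Phi p - Phi' p = nij (tau p) - tau (nij p).
Proof.
apply: inc_inj; rewrite !(linB inc_lin) s_ind.2.2 s'_ind.2.2 inc_hom.2.2 !inc_tau.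
by rewrite (linB (@nij_lin E)) !opprD !opprK addrACA.
Qed.

Lemma br_s_sub_br_s' p q n :
  nth 0 (br (s p) (s q)) n - nth 0 (br (s' p) (s' q)) n
  = nth 0 (br (inc (tau p)) (inc (tau q))) n + nth 0 (br (s' p) (inc (tau q))) n
    + nth 0 (br (inc (tau p)) (s' q)) n.
Proof.
rewrite !s_split brDl !brDr.
set X := nth 0 (br (s' p) (s' q)) n; set Y := nth 0 (br (s' p) _) n.
set W := nth 0 (br _ (s' q)) n; set Z := nth 0 (br (inc _) (inc _)) n.
by rewrite addrAC (addrC X) addrK (addrC W) addrCA addrA.
Qed.

Lemma chi_sub_chi'_nth p q n :
  inc (nth 0 (chi p q) n - nth 0 (chi' p q) n)
  = inc (nth 0 (br (tau p) (tau q)) n) - inc (tau (nth 0 (br p q) n))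
    + inc (nth 0 (rho' p (tau q)) n) + nth 0 (br (inc (tau p)) (s' q)) n.
Proof.
rewrite (linB inc_lin) s_ind.1 s'_ind.1 !opprD !opprK addrACA.
rewrite inc_br s'_ind.2.1 (inc_tau (nth 0 (br p q) n)) br_s_sub_br_s' opprB (addrC (- _)).
set Z := nth 0 (br (inc _) (inc _)) n; set Y := nth 0 (br (s' p) _) n.
by rewrite addrAC [Z + Y + _]addrAC.
Qed.

Lemma chi_sub_chi' p q :
  peq (Pl (@dd H) (chi p q) ++ tneg (Pl (@dd H) (chi' p q)))
      (Pl (@dd H) (br (tau p) (tau q))
       ++ tneg (tmap tau (Pl (@dd L) (br p q)))
       ++ Pl (@dd H) (rho' p (tau q))
       ++ tneg (subst (@dd H) (rho' q (tau p)) (-1) 0 (-1))).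
Proof.
move=> i j; apply: inc_inj.
(* skew-symmetry in E' for the cross term [tau(p)_lambda s'(q)] *)
have skew : inc (coef2 (subst (@dd H) (rho' q (tau p)) (-1) 0 (-1)) i j)
            = - coef2 (Pl (@dd E) (br (inc (tau p)) (s' q))) i j.
  rewrite (coef2_subst_morph (@dd_lin H) (@dd_lin E) inc_lin inc_hom.1.2
             (g := br (s' q) (inc (tau p)))); last exact: s'_ind.2.1.
  by rewrite br_skew coef2_tneg opprK.
rewrite !coef2_cat !coef2_tneg (coef2_tmap tau_cdlin.1) !(linD inc_lin) !(linN inc_lin).
rewrite skew !coef2_Pl opprK !addrA; case: eqP => _.
  by rewrite -(linB inc_lin) chi_sub_chi'_nth.
by rewrite [tau _](lin0 tau_cdlin.1) !(lin0 inc_lin) !oppr0 !addr0.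
Qed.

End TwoSections.

Lemma sections_cocycle_equiv (L H E : NLCA) (inc : H -> E) (proj : E -> L)
    (s s' : L -> E)
    (chi : L -> L -> seq H) (rho : L -> H -> seq H) (Phi : L -> H)
    (chi' : L -> L -> seq H) (rho' : L -> H -> seq H) (Phi' : L -> H) :
  nhom inc -> injective inc -> cdlin proj ->
  (forall e, proj e = 0 -> exists h, inc h = e) ->
  is_section proj s -> is_section proj s' ->
  induced inc s chi rho Phi -> induced inc s' chi' rho' Phi' ->
  cocycle_equiv chi rho Phi chi' rho' Phi'.
Proof.
move=> inc_hom inc_inj [proj_lin _] ker [s_cdlin proj_s] [s'_cdlin proj_s'] s_ind s'_ind.
have [tau [tau_cdlin inc_tau]] :
    exists tau : L -> H, cdlin tau /\ forall p, inc (tau p) = s p - s' p.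
  apply: cdlin_factor inc_hom.1 inc_inj (cdlinB s_cdlin s'_cdlin) _ => p.
  by apply: ker; rewrite (linB proj_lin) proj_s proj_s' subrr.
exists tau; split=> //; split; first exact: rho_sub_rho' inc_tau s_ind s'_ind.
split; first exact: chi_sub_chi' inc_tau s_ind s'_ind.
exact: Phi_sub_Phi' inc_tau s_ind s'_ind.
Qed.

Lemma induced_comp (L H E E' : NLCA) (inc : H -> E) (inc' : H -> E') (t : E -> E')
    (s : L -> E) (chi : L -> L -> seq H) (rho : L -> H -> seq H) (Phi : L -> H) :
  nhom t -> (forall h, t (inc h) = inc' h) ->
  induced inc s chi rho Phi -> induced inc' (t \o s) chi rho Phi.
Proof.
move=> [[t_lin _] [t_br t_nij]] t_inc [chiE [rhoE PhiE]].
split; [move=> p q n | split=> [p h n | p]]; rewrite -t_inc /=.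
- by rewrite chiE (linB t_lin) t_br.
- by rewrite rhoE t_br t_inc.
- by rewrite PhiE (linB t_lin) t_nij.
Qed.

Lemma section_comp (L E E' : NLCA) (proj : E -> L) (proj' : E' -> L)
    (t : E -> E') (s : L -> E) :
  cdlin t -> (forall e, proj' (t e) = proj e) ->
  is_section proj s -> is_section proj' (t \o s).
Proof.
move=> t_cdlin t_proj [s_cdlin proj_s].
by split=> [|p]; [exact: cdlin_comp | rewrite /= t_proj].
Qed.

Theorem theorem5p7 (L H E E' : NLCA)
    (inc : H -> E) (proj : E -> L) (inc' : H -> E') (proj' : E' -> L)
    (s : L -> E) (s' : L -> E')
    (chi : L -> L -> seq H) (rho : L -> H -> seq H) (Phi : L -> H)
    (chi' : L -> L -> seq H) (rho' : L -> H -> seq H) (Phi' : L -> H) :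
  is_ext inc proj ->
  is_ext inc' proj' ->
  ext_equiv inc proj inc' proj' ->
  is_section proj s ->
  is_section proj' s' ->
  induced inc s chi rho Phi ->
  induced inc' s' chi' rho' Phi' ->
  cocycle_equiv chi rho Phi chi' rho' Phi'.
Proof.
(* only the exactness of the target extension E' is used *)
move=> _ [inc'_hom [[proj'_cdlin _] [inc'_inj [_ [ker' _]]]]].
move=> [t [t_hom [t_inc t_proj]]] s_sec s'_sec s_ind s'_ind.
apply: (sections_cocycle_equiv inc'_hom inc'_inj proj'_cdlin _ _ s'_sec _ s'_ind).
- by move=> e /ker'.
- exact: section_comp t_hom.1 t_proj s_sec.
- exact: induced_comp t_hom t_inc s_ind.
Qed.
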